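(* Let $n\in\mathbb{N}$ and let $X$ be the set of all compact subsets of $(0,1)^n$ with nonempty interior, viewed as a Borel subset of $\mathcal{K}((0,1)^n)$. There exist Borel measurable maps $f_k:X\to(0,1)^n$, $k\in\mathbb{N}$, such that for every $K\in X$: (i) $f_k(K)\in(0,1)^n\setminus K$ for all $k$; (ii) the sequence $(f_k(K))_{k=1}^\infty$ is injective; (iii) $\overline{\{f_k(K):k\in\mathbb{N}\}}=\{f_k(K):k\in\mathbb{N}\}\cup\partial K$; (iv) for every $l\in\mathbb{N}$ the point $f_l(K)$ is isolated in $\overline{\{f_k(K):k\in\mathbb{N}\}}$.
   Context: $\mathcal{K}(Z)$ is the space of compact subsets of $Z$ with the Vietoris topology. Closures, interiors and boundaries are taken in $\mathbb{R}^n$. *)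

From HB Require Import structures.
From mathcomp Require Import all_boot all_order all_algebra.
From mathcomp Require Import all_classical all_reals all_analysis.
Set Implicit Arguments. Unset Strict Implicit. Unset Printing Implicit Defensive.
Import Order.TTheory GRing.Theory Num.Theory.
Import numFieldNormedType.Exports.
Local Open Scope classical_set_scope.
Local Open Scope ring_scope.

Section Defs.
Variables (R : realType) (n : nat).
Local Notation V := 'rV[R]_n.

Definition cube01 : set V := [set x | forall i : 'I_n, 0 < x ord0 i < 1].

Definition boundary (A : set V) : set V := closure A `\` interior A.

Definition borelV : set (set V) := <<s [set U : set V | open U] >>.

(* Subbasic open sets of the Vietoris topology on K((0,1)^n):
   {K | K ⊆ U} and {K | K ∩ U ≠ ∅}, U open in (0,1)^n (i.e. U = W ∩ (0,1)^n, W open). *)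
Definition vietoris_subbasic (S : set (set V)) : Prop :=
  exists2 W : set V, open W &
    (S = [set K | K `<=` W `&` cube01] \/ S = [set K | K `&` (W `&` cube01) !=set0]).

Definition vietoris_basic (B : set (set V)) : Prop :=
  exists s : seq (set (set V)),
    (forall S, S \in s -> vietoris_subbasic S) /\
    B = [set K | forall S, S \in s -> S K].

Definition Kcube : set (set V) := [set K | compact K /\ K `<=` cube01].

Definition vietoris_open (O : set (set V)) : Prop :=
  O `<=` Kcube /\
  forall K, O K -> exists2 B, vietoris_basic B & B K /\ B `&` Kcube `<=` O.

Definition Xint : set (set V) := [set K | Kcube K /\ interior K !=set0].

Definition borelX : set (set (set V)) :=
  <<s Xint, [set Xint `&` O | O in vietoris_open] >>.

Definition borel_map_X (f : set V -> V) : Prop :=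
  forall B : set V, borelV B -> borelX (Xint `&` f @^-1` B).

End Defs.

Arguments cube01 {R n}.
Arguments Xint {R n}.
Arguments Kcube {R n}.

From HB Require Import structures.
From mathcomp Require Import all_boot all_order all_algebra.
From mathcomp Require Import all_classical all_reals all_analysis.
From mathcomp Require Import ring lra zify.
Import Order.TTheory GRing.Theory Num.Theory.
Import numFieldNormedType.Exports.
Local Open Scope classical_set_scope.
Local Open Scope ring_scope.

Set Implicit Arguments.
Unset Strict Implicit.
Unset Printing Implicit Defensive.

(* For K in X we select the dyadic grid points p of level m, i.e. with coordinates
   (2a+1)/2^(m+1), such that  2^-m < dist(p, K) < 3 * 2^-m.  All grid points are
   enumerated once and for all by the natural numbers, and f_k(K) is the k-th selected
   point in that enumeration.
   - A selected point lies outside K, and grid points of different levels or positions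
     are distinct, so k |-> f_k(K) is injective.
   - A selected point of level m is 3 * 2^-m close to K; hence near a point x at distance
     d from K only levels with 2^-m > d/6 occur, and distinct grid points of bounded level
     are uniformly separated.  So selected points accumulate nowhere outside K: this gives
     isolation and  closure S <= S u boundary K.
   - Near a boundary point y there are selected points of arbitrarily high level: on the
     segment from y to a nearby point w outside K the distance to K takes the value
     2 * 2^-m (intermediate value theorem), and the nearest level-m grid point is selected.
     This gives  boundary K <= closure S.
   - "p is selected for K" is a Boolean combination of the Vietoris sets {K | K <= U} and
     {K | K meets U}, and the k-th element of an infinite subset of nat depending
     measurably on a parameter depends measurably on it; this gives Borel measurability. *)

Section GeneratedMeasurability.
Variables (T : Type) (D : set T) (G : set (set T)).

Definition meas_on (Q : set T) : Prop := <<s D, G>> (D `&` Q).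

Lemma meas_on_ext (Q Q' : set T) :
  (forall x, D x -> (Q x <-> Q' x)) -> meas_on Q -> meas_on Q'.
Proof.
move=> QQ'; rewrite /meas_on (_ : D `&` Q' = D `&` Q) //.
by apply/seteqP; split=> x [Dx Qx]; split=> //; apply/(QQ' x Dx).
Qed.

Lemma meas_onC (Q : set T) : meas_on Q -> meas_on (~` Q).
Proof.
move=> /sigma_algebraCD; rewrite /meas_on (_ : D `\` (D `&` Q) = D `&` ~` Q) //.
by rewrite setDIr setDv set0U.
Qed.

Lemma meas_on_bigcup (F : nat -> set T) :
  (forall k, meas_on (F k)) -> meas_on (\bigcup_k F k).
Proof. by move=> mF; rewrite /meas_on setI_bigcupr; exact: sigma_algebra_bigcup. Qed.

Lemma meas_onU (A B : set T) : meas_on A -> meas_on B -> meas_on (A `|` B).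
Proof.
move=> mA mB; rewrite -bigcup2E; apply: meas_on_bigcup => -[|[|k]] //=.
by rewrite /meas_on setI0; exact: sigma_algebra0.
Qed.

Lemma meas_onI (A B : set T) : meas_on A -> meas_on B -> meas_on (A `&` B).
Proof.
move=> mA mB; rewrite -[A `&` B]setCK setCI.
by apply: meas_onC; apply: meas_onU; apply: meas_onC.
Qed.

Lemma meas_on_const (P : Prop) : meas_on [set _ | P].
Proof.
have m0 : meas_on set0 by rewrite /meas_on setI0; exact: sigma_algebra0.
have [p|np] := pselect P; last by apply: meas_on_ext m0 => x _; split.
by apply: meas_on_ext (meas_onC m0) => x _; split => // _ [].
Qed.
End GeneratedMeasurability.

Section Enumeration.
Variable P : pred nat.

(* The least j >= i satisfying P (0 if there is none). *)
Definition next_at (i : nat) : nat :=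
  match pselect (exists j, (i <= j)%N && P j) with
  | left h => ex_minn h
  | right _ => 0%N
  end.

Fixpoint enum_at (k : nat) : nat :=
  next_at (if k is k'.+1 then (enum_at k').+1 else 0%N).

Hypothesis P_inf : forall i, exists j, (i <= j)%N && P j.

Lemma next_atP i :
  [/\ (i <= next_at i)%N, P (next_at i) &
      forall j, (i <= j)%N -> P j -> (next_at i <= j)%N].
Proof.
rewrite /next_at; case: pselect => [h|]; last by move/(_ (P_inf i)).
case: ex_minnP => j /andP [ij Pj] jmin; split=> // l il Pl.
by apply: jmin; rewrite il.
Qed.

(* next_at i is determined by finitely many values of P; this is what makes it measurable. *)
Lemma next_at_eq i j : next_at i = j <->
  [/\ (i <= j)%N, P j & forall l, (i <= l < j)%N -> ~~ P l].
Proof.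
have [i_le P_next next_min] := next_atP i; split.
  move=> <-; split=> // l /andP [il lj]; apply/negP => /(next_min l il).
  by rewrite leqNgt lj.
move=> [ij Pj jmin]; apply/eqP; rewrite eqn_leq next_min //=.
rewrite leqNgt; apply/negP => lt_next.
have i_next : (i <= next_at i < j)%N by rewrite i_le lt_next.
exact: (negP (jmin _ i_next)).
Qed.

Lemma enum_atP k : P (enum_at k).
Proof. by case: k => [|k]; [case: (next_atP 0)|case: (next_atP (enum_at k).+1)]. Qed.

Lemma enum_at_ltS k : (enum_at k < enum_at k.+1)%N.
Proof. by case: (next_atP (enum_at k).+1). Qed.

Lemma enum_at_inj : injective enum_at.
Proof. exact/incn_inj/leq_mono/(homo_ltn ltn_trans enum_at_ltS). Qed.

Lemma enum_at_surj j : P j -> exists k, enum_at k = j.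
Proof.
move=> Pj; apply: contrapT => not_hit.
have below k : (enum_at k <= j)%N.
  elim: k => [|k IH]; first by case: (next_atP 0) => _ _ /(_ j isT Pj).
  have lt_kj : (enum_at k < j)%N.
    by rewrite ltn_neqAle IH andbT; apply/eqP => ekj; apply: not_hit; exists k.
  by case: (next_atP (enum_at k).+1) => _ _ /(_ j lt_kj Pj).
have ge_id k : (k <= enum_at k)%N.
  by elim: k => // k IH; exact: leq_ltn_trans IH (enum_at_ltS k).
by have := leq_trans (ge_id j.+1) (below j.+1); rewrite ltnn.
Qed.
End Enumeration.

Section MeasurableEnumeration.
Variables (T : Type) (D : set T) (G : set (set T)) (P : T -> pred nat).
Hypothesis P_inf : forall x, D x -> forall i, exists j, (i <= j)%N && P x j.
Hypothesis P_meas : forall j, meas_on D G [set x | P x j].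

Lemma meas_on_next_at i j : meas_on D G [set x | next_at (P x) i = j].
Proof.
pose gap := \bigcup_l ([set _ | (i <= l < j)%N] `&` [set x | P x l]).
have gap_meas : meas_on D G gap.
  by apply: meas_on_bigcup => l; apply: meas_onI; [exact: meas_on_const|exact: P_meas].
apply: (@meas_on_ext _ _ _ ([set _ | (i <= j)%N] `&` [set x | P x j] `&` ~` gap)).
  move=> x Dx; rewrite /= next_at_eq; last exact: P_inf.
  split=> [[[ij Pj] no_gap]|[ij Pj jmin]].
    by split=> // l ilj; apply/negP => Pl; apply: no_gap; exists l.
  by split=> // -[l _ [ilj Pl]]; move: (jmin l ilj); rewrite Pl.
apply: meas_onI; last exact: meas_onC.
by apply: meas_onI; [exact: meas_on_const|exact: P_meas].
Qed.

Lemma meas_on_enum_at k j : meas_on D G [set x | enum_at (P x) k = j].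
Proof.
elim: k j => [|k IH] j; first exact: meas_on_next_at.
apply: (@meas_on_ext _ _ _ (\bigcup_i ([set x | enum_at (P x) k = i] `&`
                                       [set x | next_at (P x) i.+1 = j]))).
  by move=> x _; split=> [[i _ [/= <-]]|<-] //; exists (enum_at (P x) k).
by apply: meas_on_bigcup => i; apply: meas_onI; [exact: IH|exact: meas_on_next_at].
Qed.
End MeasurableEnumeration.

Section NormedSpace.
Variables (R : realType) (V : normedModType R).

Lemma closure_normP (A : set V) x :
  closure A x <-> forall e, 0 < e -> exists2 y, A y & `|x - y| < e.
Proof.
split=> [Ax e e0|near_A B /nbhs_ballP [e /= e0 eB]].
  have [y [Ay]] := Ax _ (nbhsx_ballx x e e0).
  by rewrite -ball_normE => xy; exists y.
by have [y Ay xy] := near_A e e0; exists y; split=> //; apply: eB; rewrite -ball_normE.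
Qed.

Lemma interior_normP (A : set V) x :
  interior A x <-> exists2 e, 0 < e & forall y, `|x - y| < e -> A y.
Proof.
split=> [/nbhs_ballP [e /= e0 eA]|[e e0 eA]].
  by exists e => // y xy; apply: eA; rewrite -ball_normE.
by apply/nbhs_ballP; exists e => // y; rewrite -ball_normE; exact: eA.
Qed.

Lemma closed_gap (K : set V) x : closed K -> ~ K x ->
  exists2 d, 0 < d & forall z, K z -> d <= `|x - z|.
Proof.
move=> cK Kx; have /interior_normP [d d0 dK] : interior (~` K) x.
  by rewrite (interior_id _).1 //; exact: closed_openC.
by exists d => // z Kz; rewrite leNgt; apply/negP => /dK.
Qed.

Lemma open_far (p : V) r : open [set z | r < `|p - z|].
Proof.
rewrite openE => z /= rz; apply/interior_normP; exists (`|p - z| - r).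
  by rewrite subr_gt0.
move=> y zy /=; have := ler_distD y p z; rewrite (distrC y z); lra.
Qed.

Section DistanceToSet.
Variables (K : set V) (y0 : V).
Hypothesis Ky0 : K y0.

Definition dist_to (z : V) : R := inf [set `|z - k| | k in K].

Lemma dist_to_le z k : K k -> dist_to z <= `|z - k|.
Proof. by move=> Kk; apply: ge_inf; [exists 0 => _ [? _ <-]|exists k]. Qed.

Lemma dist_to_ge z c : (forall k, K k -> c <= `|z - k|) -> c <= dist_to z.
Proof.
by move=> cK; apply: lb_le_inf; [exists `|z - y0|, y0|move=> _ [k Kk <-]; exact: cK].
Qed.

Lemma dist_to_ge0 z : 0 <= dist_to z.
Proof. by apply: dist_to_ge => k _. Qed.

Lemma dist_to_ltP z c : dist_to z < c -> exists2 k, K k & `|z - k| < c.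
Proof.
by move=> /(inf_lt (ex_intro _ `|z - y0| (ex_intro2 _ _ y0 Ky0 erefl))) [_ [k Kk <-]];
  exists k.
Qed.

Lemma dist_to_lip z z' : dist_to z <= dist_to z' + `|z - z'|.
Proof.
rewrite -lerBlDr; apply: dist_to_ge => k Kk; rewrite lerBlDr.
by apply: le_trans (dist_to_le z Kk) _; rewrite [leRHS]addrC ler_distD.
Qed.

Lemma dist_to_lipschitz z z' : `|dist_to z - dist_to z'| <= `|z - z'|.
Proof.
have := dist_to_lip z z'; have := dist_to_lip z' z.
by rewrite ler_norml (distrC z' z) => ? ?; apply/andP; split; lra.
Qed.
End DistanceToSet.
End NormedSpace.

Lemma lipschitz_continuous (R : realType) (f : R -> R) (c : R) :
  (forall s t, `|f s - f t| <= c * `|s - t|) -> continuous f.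
Proof.
move=> fc x; apply/cvgrPdist_lt => e e0.
have c1 : 0 < `|c| + 1 by rewrite ltr_wpDl.
near=> t; apply: le_lt_trans (fc x t) _.
apply: (@le_lt_trans _ _ ((`|c| + 1) * `|x - t|)).
  by rewrite ler_wpM2r // (le_trans (ler_norm c)) // lerDl.
rewrite -ltr_pdivlMl //; near: t; apply: cvgr_dist_lt; first exact: cvg_id.
by rewrite mulr_gt0 ?invr_gt0.
Unshelve. all: by end_near.
Qed.

Lemma segment_dist_hits (R : realType) (V : normedModType R) (K : set V) y w c :
  K y -> 0 <= c <= dist_to K w ->
  exists2 t, 0 <= t <= 1 & dist_to K (y + t *: (w - y)) = c.
Proof.
move=> Ky /andP [c0 cw]; pose phi t := dist_to K (y + t *: (w - y)).
have phi_cont : continuous phi.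
  apply: (@lipschitz_continuous _ _ `|w - y|) => s t.
  rewrite /phi (le_trans (dist_to_lipschitz Ky _ _)) //.
  by rewrite opprD addrACA subrr add0r -scalerBl normrZ mulrC.
have phi0 : phi 0 = 0.
  apply/eqP; rewrite eq_le (dist_to_ge0 Ky) andbT.
  by rewrite /phi scale0r addr0 (le_trans (dist_to_le _ Ky)) // subrr normr0.
have c_between : Num.min (phi 0) (phi 1) <= c <= Num.max (phi 0) (phi 1).
  by rewrite phi0 /phi scale1r addrC subrK ge_min c0 /= le_max cw orbT.
have [t t01 phit] := IVT ler01 (continuous_subspaceT phi_cont) c_between.
by exists t => //; rewrite in_itv /= in t01.
Qed.

Lemma logn2_odd_mul a x : logn 2 ((2 * a + 1) * 2 ^ x) = x.
Proof. by rewrite logn_Gauss ?pfactorK // coprime2n addn1 /= mul2n odd_double. Qed.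

Lemma odd_mul_pow2_inj a b x y :
  ((2 * a + 1) * 2 ^ x = (2 * b + 1) * 2 ^ y)%N -> x = y /\ a = b.
Proof.
move=> e; have exy : x = y by rewrite -(logn2_odd_mul a x) e logn2_odd_mul.
split=> //; move: e; rewrite exy => /eqP; rewrite eqn_pmul2r ?expn_gt0 //.
by rewrite eqn_add2r eqn_pmul2l // => /eqP.
Qed.

Section DyadicGrid.
Variables (R : realType) (n : nat).
Local Notation V := 'rV[R]_n.

Definition dyad (m : nat) : R := (2 ^ m)%:R^-1.

Lemma dyad_gt0 m : 0 < dyad m.
Proof. by rewrite invr_gt0 ltr0n expn_gt0. Qed.

Lemma dyadS m : dyad m.+1 = dyad m / 2.
Proof. by rewrite /dyad expnS natrM invfM mulrC. Qed.

Lemma dyad_le m M : (M <= m)%N -> dyad m <= dyad M.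
Proof. by move=> Mm; rewrite lef_pV2 ?posrE ?ltr0n ?expn_gt0 // ler_nat leq_exp2l. Qed.

Lemma dyad_small e : 0 < e -> exists M, dyad M < e.
Proof.
move=> e0; exists (Num.bound e^-1).
rewrite -[ltRHS]invrK ltf_pV2 ?posrE ?invr_gt0 ?ltr0n ?expn_gt0 // natrX.
exact: upper_nthrootP.
Qed.

(* The centre (2a+1)/2^(m+1) of the a-th dyadic interval of level m. *)
Definition coord (m a : nat) : R := (2 * a + 1)%:R * dyad m.+1.

Lemma coord_in m a : (a < 2 ^ m)%N -> 0 < coord m a < 1.
Proof.
move=> a_lt; rewrite mulr_gt0 ?ltr0n ?addn1 ?dyad_gt0 //=.
rewrite ltr_pdivrMr ?ltr0n ?expn_gt0 // mul1r ltr_nat expnS; lia.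
Qed.

Lemma coord_near (x : R) m : 0 <= x <= 1 ->
  exists2 a, (a < 2 ^ m)%N & `|coord m a - x| <= dyad m.+1.
Proof.
move=> /andP [x0 x1]; set t := x * (2 ^ m)%:R.
have pow_neq0 : (2 ^ m)%:R != 0 :> R by rewrite pnatr_eq0 -lt0n expn_gt0.
have near_cell (a : nat) : a%:R <= t <= a%:R + 1 -> `|coord m a - x| <= dyad m.+1.
  move=> /andP [a_le_t t_le_a1].
  have -> : coord m a - x = ((2 * a + 1)%:R - 2 * t) * dyad m.+1.
    by rewrite /coord /t /dyad expnS natrM; field; rewrite pow_neq0.
  rewrite normrM (gtr0_norm (dyad_gt0 _)); apply: ler_piMl; first exact/ltW/dyad_gt0.
  by rewrite natrD natrM ler_norml; apply/andP; split; lra.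
have [x_lt1|x_ge1] := ltP x 1.
  have t0 : 0 <= t by rewrite mulr_ge0.
  have /andP [le_t lt_t] := truncn_itv t0.
  exists (Num.truncn t); last by apply: near_cell; rewrite le_t natr1 ltW.
  rewrite -(ltr_nat R); apply: le_lt_trans le_t _.
  by rewrite -[ltRHS]mul1r ltr_pM2r // ltr0n expn_gt0.
have x_eq1 : x = 1 by apply/eqP; rewrite eq_le x1 x_ge1.
have pow_gt0 : (0 < 2 ^ m)%N by rewrite expn_gt0.
exists (2 ^ m).-1; first by rewrite prednK.
apply: near_cell; rewrite /t x_eq1 mul1r natr1 prednK // lexx andbT ler_nat.
exact: leq_pred.
Qed.

Lemma coord_rescale m M a : (m <= M)%N ->
  coord m a = ((2 * a + 1) * 2 ^ (M - m))%:R * dyad M.+1.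
Proof.
have pow_neq0 k : (2 ^ k)%:R != 0 :> R by rewrite pnatr_eq0 -lt0n expn_gt0.
move=> mM; have -> : M.+1 = (m.+1 + (M - m))%N by rewrite addSn subnKC.
rewrite /coord /dyad expnD !natrM.
by field; rewrite !pow_neq0.
Qed.

Lemma coord_inj m m' a b : coord m a = coord m' b -> m = m' /\ a = b.
Proof.
have pow_neq0 k : (2 ^ k)%:R != 0 :> R by rewrite pnatr_eq0 -lt0n expn_gt0.
rewrite /coord /dyad => /eqP; rewrite eqr_div ?pow_neq0 // -!natrM eqr_nat.
by move=> /eqP /odd_mul_pow2_inj [[->] ->].
Qed.

(* The norm of a row vector is the maximum of the absolute values of its entries. *)
Lemma norm_entry_le (x : V) i : `|x ord0 i| <= `|x|.
Proof.
rewrite (_ : `|x| = mx_norm x) // mx_normrE.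
exact: (le_bigmax _ (fun ij : 'I_1 * 'I_n => `|x ij.1 ij.2|) (ord0, i)).
Qed.

Lemma norm_le_entries (x : V) e : 0 <= e -> (forall i, `|x ord0 i| <= e) -> `|x| <= e.
Proof.
move=> e0 xe; rewrite (_ : `|x| = mx_norm x) // mx_normrE.
by apply: bigmax_le => // -[i j] _ /=; rewrite (ord1 i); exact: xe.
Qed.

Definition grid_point m (s : n.-tuple nat) : V := \row_i coord m (tnth s i).

Definition on_grid m (s : n.-tuple nat) : Prop := forall i, (tnth s i < 2 ^ m)%N.

Lemma grid_point_cube m s : on_grid m s -> cube01 (grid_point m s).
Proof. by move=> sm i; rewrite mxE; apply: coord_in. Qed.

Lemma grid_point_near (z : V) m : (forall i, 0 <= z ord0 i <= 1) ->
  exists2 s, on_grid m s & `|grid_point m s - z| <= dyad m.+1.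
Proof.
move=> z01; have /choice [a aP] i : exists a,
    (a < 2 ^ m)%N /\ `|coord m a - z ord0 i| <= dyad m.+1.
  by have [a ? ?] := coord_near m (z01 i); exists a.
exists [tuple a i | i < n] => [i|]; first by rewrite tnth_mktuple; case: (aP i).
apply: norm_le_entries => [|i]; first exact/ltW/dyad_gt0.
by rewrite !mxE tnth_mktuple; case: (aP i).
Qed.

Lemma grid_point_sep m m' M s s' : (m <= M)%N -> (m' <= M)%N ->
  grid_point m s <> grid_point m' s' ->
  dyad M.+1 <= `|grid_point m s - grid_point m' s'|.
Proof.
move=> mM m'M neq.
have [i neq_i] : exists i, grid_point m s ord0 i <> grid_point m' s' ord0 i.
  apply: contrapT => all_eq; apply: neq; apply/rowP => i.
  by apply: contrapT => neq_i; apply: all_eq; exists i.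
apply: le_trans (norm_entry_le _ i).
move: neq_i; rewrite !mxE (coord_rescale _ mM) (coord_rescale _ m'M) -mulrBl.
move=> neq_i; rewrite normrM (gtr0_norm (dyad_gt0 _)) ler_pMl ?dyad_gt0 //.
apply: norm_intr_ge1; first by rewrite rpredB // natr_int.
by rewrite subr_eq0; apply/eqP => eq_i; apply: neq_i; rewrite eq_i.
Qed.

(* In positive dimension a grid point determines its level and coordinates. *)
Lemma grid_point_inj (i0 : 'I_n) m m' s s' :
  grid_point m s = grid_point m' s' -> m = m' /\ s = s'.
Proof.
move=> e; have ei i : coord m (tnth s i) = coord m' (tnth s' i).
  by have := congr1 (fun x : V => x ord0 i) e; rewrite !mxE.
have [-> _] := coord_inj (ei i0); split=> //.
by apply: eq_from_tnth => i; case: (coord_inj (ei i)).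
Qed.

Lemma cube01_closed_coord (x : V) : cube01 x -> forall i, 0 <= x ord0 i <= 1.
Proof. by move=> x01 i; have /andP [? ?] := x01 i; rewrite !ltW. Qed.

Lemma cube01_nbhs (x : V) : cube01 x ->
  exists2 c, 0 < c & forall w : V, `|x - w| < c -> forall i, 0 <= w ord0 i <= 1.
Proof.
move=> x01; pose c := \big[Num.min/1]_(i < n) Num.min (x ord0 i) (1 - x ord0 i).
have c_le i : c <= x ord0 i /\ c <= 1 - x ord0 i.
  have : c <= Num.min (x ord0 i) (1 - x ord0 i) by exact: bigmin_le.
  by rewrite le_min => /andP.
exists c => [|w xw i].
  apply/bigmin_gtP; split=> // i _; have /andP [xi0 xi1] := x01 i.
  by rewrite lt_min xi0 subr_gt0.
have := le_lt_trans (norm_entry_le (x - w) i) xw; rewrite !mxE ltr_norml.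
by have [? ?] := c_le i; move=> /andP [? ?]; apply/andP; split; lra.
Qed.
End DyadicGrid.

Section Selection.
Variables (R : realType) (n : nat).
Local Notation V := 'rV[R]_n.
Local Notation grid_point := (@grid_point R n).
Local Notation dyad := (@dyad R).

Definition selected (K : set V) m s : Prop :=
  [/\ on_grid m s, forall z, K z -> dyad m < `|grid_point m s - z|
    & exists2 z, K z & `|grid_point m s - z| < 3 * dyad m].

Lemma selected_out (K : set V) m s : selected K m s ->
  cube01 (grid_point m s) /\ ~ K (grid_point m s).
Proof.
move=> [on_s far _]; split; first exact: grid_point_cube.
by move=> /far; rewrite subrr normr0 ltNge ltW ?dyad_gt0.
Qed.

Lemma selected_level (K : set V) (x : V) d M m s :
  (forall z, K z -> d <= `|x - z|) -> dyad M < d / 6 ->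
  selected K m s -> `|x - grid_point m s| < d / 2 -> (m <= M)%N.
Proof.
move=> xK dM [_ _ [z Kz pz]] xp; rewrite leqNgt; apply/negP => /ltnW /(dyad_le R) mM.
have := xK z Kz; have := ler_distD (grid_point m s) x z; lra.
Qed.

Lemma selected_isolated (K : set V) (x : V) d :
  0 < d -> (forall z, K z -> d <= `|x - z|) ->
  exists2 rho, 0 < rho <= d & forall m s m' s',
    selected K m s -> selected K m' s' ->
    `|x - grid_point m s| < rho -> `|x - grid_point m' s'| < rho ->
    grid_point m s = grid_point m' s'.
Proof.
move=> d0 xK; have [M dM] := dyad_small (divr_gt0 d0 (ltr0n R 6)).
pose rho := Num.min (d / 2) (dyad M.+2).
have rho_d2 : rho <= d / 2 by rewrite ge_min lexx.
have rho_M : rho <= dyad M.+2 by rewrite ge_min lexx orbT.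
exists rho => [|m s m' s' sel sel' xp xp'].
  by rewrite lt_min divr_gt0 ?dyad_gt0 //=; lra.
have mM := selected_level xK dM sel (lt_le_trans xp rho_d2).
have m'M := selected_level xK dM sel' (lt_le_trans xp' rho_d2).
apply: contrapT => /(grid_point_sep mM m'M).
have := ler_distD x (grid_point m s) (grid_point m' s'); rewrite (distrC _ x).
have := dyadS R M.+1; lra.
Qed.

Lemma grid_selected_at_dist (K : set V) (y : V) m (z : V) :
  K y -> dist_to K z = 2 * dyad m -> (forall i, 0 <= z ord0 i <= 1) ->
  exists2 s, selected K m s & `|grid_point m s - z| <= dyad m.+1.
Proof.
move=> Ky dz z01; have [s on_s pz] := grid_point_near m z01.
have := dist_to_lipschitz Ky (grid_point m s) z.
rewrite ler_norml dz => /andP [lip1 lip2]; rewrite dyadS in pz.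
exists s; rewrite ?dyadS //; split=> // [k Kk|].
  by have := dist_to_le (grid_point m s) Kk; have := dyad_gt0 R m; lra.
by apply: (dist_to_ltP Ky); have := dyad_gt0 R m; lra.
Qed.

Lemma selected_near (K : set V) (y w : V) M0 : closed K -> K y -> ~ K w ->
  (forall i, 0 <= y ord0 i <= 1) -> (forall i, 0 <= w ord0 i <= 1) ->
  exists m s, [/\ (M0 <= m)%N, selected K m s &
                  `|y - grid_point m s| <= `|y - w| + dyad m.+1].
Proof.
move=> cK Ky Kw y01 w01; have [gap gap0 w_far] := closed_gap cK Kw.
have [M1 M1_gap] := dyad_small (divr_gt0 gap0 (ltr0n R 2)).
pose m := maxn M0 M1; have m_gap : dyad m <= dyad M1 by rewrite dyad_le ?leq_maxr.
have c_range : 0 <= 2 * dyad m <= dist_to K w.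
  have := dist_to_ge Ky w_far; have := dyad_gt0 R m.
  by move=> ? ?; apply/andP; split; lra.
have [t /andP [t0 t1] dz] := segment_dist_hits Ky c_range.
pose z := y + t *: (w - y).
have z01 i : 0 <= z ord0 i <= 1.
  have /andP [? ?] := y01 i; have /andP [? ?] := w01 i.
  by rewrite !mxE; apply/andP; split; nra.
have [s sel pz] := grid_selected_at_dist Ky dz z01.
exists m, s; split=> //; first exact: leq_maxl.
have yz : `|y - z| <= `|y - w|.
  rewrite /z opprD addrA subrr add0r normrN normrZ ger0_norm // distrC.
  by rewrite ler_piMl.
by have := ler_distD z y (grid_point m s); rewrite (distrC z); lra.
Qed.
End Selection.

Section SelectedIndices.
Variables (R : realType) (n : nat).
Local Notation V := 'rV[R]_n.
Local Notation grid_point := (@grid_point R n).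
Local Notation selected := (@selected R n).

Definition decode (j : nat) : option (nat * n.-tuple nat) := pickle_inv j.

(* The grid point with index j (0 for indices encoding nothing). *)
Definition index_point (j : nat) : V :=
  if decode j is Some (m, s) then grid_point m s else 0.

Definition sel_index (K : set V) (j : nat) : Prop :=
  exists m s, decode j = Some (m, s) /\ selected K m s.

Definition sel_pred (K : set V) : pred nat := fun j => `[< sel_index K j >].

Lemma sel_index_pickle (K : set V) m s : selected K m s ->
  sel_index K (pickle (m, s)) /\ index_point (pickle (m, s)) = grid_point m s.
Proof.
by rewrite /sel_index /index_point /decode pickleK_inv => sel; split=> //; exists m, s.
Qed.

Lemma sel_index_out (K : set V) j : sel_index K j ->
  cube01 (index_point j) /\ ~ K (index_point j).
Proof. by move=> [m [s [dj sel]]]; rewrite /index_point dj; exact: selected_out. Qed.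

Lemma sel_index_isolated (K : set V) (x : V) d :
  0 < d -> (forall z, K z -> d <= `|x - z|) ->
  exists2 rho, 0 < rho <= d & forall j j', sel_index K j -> sel_index K j' ->
    `|x - index_point j| < rho -> `|x - index_point j'| < rho ->
    index_point j = index_point j'.
Proof.
move=> d0 xK; have [rho rho_d iso] := selected_isolated d0 xK.
exists rho => // j j' [m [s [dj sel]]] [m' [s' [dj' sel']]].
by rewrite /index_point dj dj'; exact: iso.
Qed.

Lemma sel_index_inj (i0 : 'I_n) (K : set V) j j' :
  sel_index K j -> sel_index K j' -> index_point j = index_point j' -> j = j'.
Proof.
move=> [m [s [dj _]]] [m' [s' [dj' _]]]; rewrite /index_point dj dj'.
move=> /(grid_point_inj i0) [em es].
have := @pickle_invK (nat * n.-tuple nat)%type j.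
have := @pickle_invK (nat * n.-tuple nat)%type j'.
by rewrite /decode in dj dj'; rewrite dj dj' em es /= => -> ->.
Qed.

(* A nonempty closed subset of the cube has infinitely many selected indices: the
   indices below i have bounded level, and selected points of higher level exist. *)
Lemma sel_index_unbounded (i0 : 'I_n) (K : set V) (y : V) :
  closed K -> K `<=` cube01 -> K y -> forall i, exists j, (i <= j)%N && sel_pred K j.
Proof.
move=> cK K_cube Ky i; pose level j := oapp (fun ms => ms.1) 0%N (decode j).
have level_le j : (j < i)%N -> (level j <= \max_(l < i) level l)%N.
  by move=> ji; exact: (@leq_bigmax _ (fun l : 'I_i => level l) (Ordinal ji)).
have K0 : ~ K 0 by move=> /K_cube /(_ i0); rewrite mxE ltxx.
have zero01 k : 0 <= (0 : V) ord0 k <= 1 by rewrite mxE lexx ler01.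
have [m [s [mL sel _]]] := selected_near (\max_(l < i) level l).+1 cK Ky K0
  (cube01_closed_coord (K_cube y Ky)) zero01.
have [selj _] := sel_index_pickle sel.
exists (pickle (m, s)); apply/andP; split; last exact/asboolP.
rewrite leqNgt; apply/negP => /level_le.
by rewrite /level /decode pickleK_inv /= leqNgt mL.
Qed.
End SelectedIndices.

Definition sel_point (R : realType) (n : nat) (K : set 'rV[R]_n) (k : nat) : 'rV[R]_n :=
  @index_point R n (enum_at (sel_pred K) k).

Section FixedSet.
Variables (R : realType) (n : nat) (i0 : 'I_n) (K : set 'rV[R]_n).
Local Notation V := 'rV[R]_n.
Hypothesis XK : Xint K.

Let S := range (sel_point K).

Lemma Xint_closed : closed K.
Proof. by case: XK => -[cK _] _; apply: compact_closed cK; exact: norm_hausdorff. Qed.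

Lemma Xint_closure : closure K = K.
Proof. by apply/esym/closure_id; exact: Xint_closed. Qed.

Lemma Xint_cube : K `<=` cube01.
Proof. by case: XK => -[]. Qed.

Lemma sel_pred_inf i : exists j, (i <= j)%N && sel_pred K j.
Proof.
have [[_ K_cube] [y /interior_subset Ky]] := XK.
exact: (sel_index_unbounded i0 Xint_closed K_cube Ky).
Qed.

Lemma sel_point_index k : sel_index K (enum_at (sel_pred K) k).
Proof. exact/asboolP/(enum_atP sel_pred_inf). Qed.

Lemma sel_point_out k : (cube01 `\` K) (sel_point K k).
Proof. by have [] := sel_index_out (sel_point_index k). Qed.

Lemma sel_point_inj : injective (sel_point K).
Proof.
move=> k k' /(sel_index_inj i0 (sel_point_index k) (sel_point_index k')).
exact: (enum_at_inj sel_pred_inf).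
Qed.

Lemma sel_point_isolated (x : V) : ~ K x ->
  exists rho, [/\ 0 < rho, forall z, K z -> rho <= `|x - z| &
    forall k k', `|x - sel_point K k| < rho -> `|x - sel_point K k'| < rho ->
      sel_point K k = sel_point K k'].
Proof.
move=> Kx; have [d d0 xK] := closed_gap Xint_closed Kx.
have [rho /andP [rho0 rho_d] iso] := sel_index_isolated d0 xK.
exists rho; split=> // [z /xK|k k']; first exact: le_trans.
by apply: iso; exact: sel_point_index.
Qed.

Lemma closure_sel_sub : closure S `<=` S `|` boundary K.
Proof.
move=> x Sx; have [Kx|Kx] := pselect (K x).
  right; split; first exact: subset_closure.
  move=> /interior_normP [e e0 eK].
  have [_ [k _ <-] xk] := (closure_normP S x).1 Sx e e0.
  by have [_] := sel_point_out k; apply; exact: eK.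
have [rho [rho0 _ iso]] := sel_point_isolated Kx.
have [_ [k _ <-] xk] := (closure_normP S x).1 Sx rho rho0.
have [->|xk_neq] := eqVneq x (sel_point K k); first by left; exists k.
have e0 : 0 < Num.min rho `|x - sel_point K k| by rewrite lt_min rho0 normr_gt0 subr_eq0.
have [_ [k' _ <-] xk'] := (closure_normP S x).1 Sx _ e0.
move: xk'; rewrite lt_min => /andP [xk'_rho]; rewrite -(iso k k') //.
by rewrite ltxx.
Qed.

Lemma boundary_sub_closure : boundary K `<=` closure S.
Proof.
move=> x [clKx notintKx]; have Kx : K x by rewrite -Xint_closure.
apply/closure_normP => e e0.
have [c c0 c_cube] := cube01_nbhs (Xint_cube Kx).
have [w xw Kw] : exists2 w, `|x - w| < Num.min (e / 2) c & ~ K w.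
  apply: contrapT => all_K; apply: notintKx; apply/interior_normP.
  exists (Num.min (e / 2) c); first by rewrite lt_min c0 divr_gt0.
  by move=> w xw; apply: contrapT => Kw; apply: all_K; exists w.
have [M0 M0e] := dyad_small (divr_gt0 e0 (ltr0n R 2)).
move: xw; rewrite lt_min => /andP [xw_e xw_c].
have [m [s [M0m sel xp]]] := selected_near M0 Xint_closed Kx Kw
  (cube01_closed_coord (Xint_cube Kx)) (c_cube w xw_c).
have [selj pj] := sel_index_pickle sel.
have [k ek] := enum_at_surj sel_pred_inf (introT (asboolP _) selj).
exists (sel_point K k); first by exists k.
have := dyad_le R (leqW M0m); rewrite /sel_point ek pj; lra.
Qed.

Lemma sel_point_closure : closure S = S `|` boundary K.
Proof.
apply/seteqP; split; first exact: closure_sel_sub.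
by move=> x [Sx|/boundary_sub_closure //]; exact: subset_closure.
Qed.

Lemma sel_point_isolated_in_closure l : exists U : set V,
  [/\ open U, U (sel_point K l) & U `&` closure S `<=` [set sel_point K l]].
Proof.
have [_ Kl] := sel_point_out l.
have [rho [rho0 far iso]] := sel_point_isolated Kl.
exists (ball (sel_point K l) rho); split; first exact: ball_open.
  exact: ballxx.
rewrite -ball_normE => z [/= lz]; rewrite sel_point_closure => -[[k _ ek]|[]].
  by rewrite -ek; apply/esym/iso; rewrite ?ek // subrr normr0.
by rewrite Xint_closure => /far; rewrite leNgt lz.
Qed.
End FixedSet.

Section VietorisBorel.
Variables (R : realType) (n : nat).
Local Notation V := 'rV[R]_n.
Local Notation XBorel :=
  (meas_on (@Xint R n) [set Xint `&` O | O in @vietoris_open R n]).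

Lemma XBorel_subbasic (S : set (set V)) : vietoris_subbasic S -> XBorel S.
Proof.
move=> subS; apply: (@meas_on_ext _ _ _ (S `&` Kcube)).
  by move=> K [KK _]; split=> [[]|].
apply: sub_sigma_algebra; exists (S `&` Kcube) => //; split=> [K []//|K [SK KK]].
exists S; last by split=> // L [].
exists [:: S]; split=> [S'|]; first by rewrite mem_seq1 => /eqP ->.
apply/seteqP; split=> L /=; first by move=> SL S'; rewrite mem_seq1 => /eqP ->.
by move=> /(_ S); rewrite mem_seq1 eqxx; apply.
Qed.

Lemma XBorel_inside (W : set V) : open W -> XBorel [set K | forall z, K z -> W z].
Proof.
move=> oW; apply: (@meas_on_ext _ _ _ [set K | K `<=` W `&` cube01]).
  move=> K [[_ K_cube] _]; split=> [KW z /KW [] //|KW z Kz].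
  by split; [exact: KW | exact: K_cube].
by apply: XBorel_subbasic; exists W => //; left.
Qed.

Lemma XBorel_hits (W : set V) : open W -> XBorel [set K | exists2 z, K z & W z].
Proof.
move=> oW; apply: (@meas_on_ext _ _ _ [set K | K `&` (W `&` cube01) !=set0]).
  move=> K [[_ K_cube] _]; split=> [[z [Kz [Wz _]]]|[z Kz Wz]]; first by exists z.
  by exists z; split=> //; split=> //; exact: K_cube.
by apply: XBorel_subbasic; exists W => //; right.
Qed.

Lemma XBorel_sel_pred j : XBorel [set K | sel_pred K j].
Proof.
case dj: (decode n j) => [[m s]|]; last first.
  apply: (@meas_on_ext _ _ _ [set _ | False]); last exact: meas_on_const.
  by move=> K _; split=> //; move/asboolP => [m [s [dj' _]]]; rewrite dj' in dj.
pose p := grid_point R m s.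
apply: (@meas_on_ext _ _ _ ([set _ | on_grid m s] `&`
    [set K | forall z, K z -> [set z | dyad R m < `|p - z|] z] `&`
    [set K | exists2 z, K z & ball p (3 * dyad R m) z])).
  move=> K _; rewrite -ball_normE; split=> [[[on_s far] near]|/asboolP [m' [s' []]]].
    by apply/asboolP; exists m, s.
  by rewrite dj => -[<- <-] [].
apply: meas_onI; first apply: meas_onI; first exact: meas_on_const.
  by apply: XBorel_inside; exact: open_far.
by apply: XBorel_hits; exact: ball_open.
Qed.

Lemma sel_point_borel (i0 : 'I_n) k : borel_map_X (fun K : set V => sel_point K k).
Proof.
move=> B _; apply: (@meas_on_ext _ _ _ (\bigcup_j
    ([set K | enum_at (sel_pred K) k = j] `&` [set _ | B (index_point R n j)]))).
  by move=> K _; split=> [[j _ [/= <-]]|] //; exists (enum_at (sel_pred K) k).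
apply: meas_on_bigcup => j; apply: meas_onI; last exact: meas_on_const.
apply: meas_on_enum_at => [K XK|]; last exact: XBorel_sel_pred.
exact: (sel_pred_inf i0 XK).
Qed.
End VietorisBorel.

Theorem lemma3p18 (R : realType) (n : nat) (hn : (1 <= n)%N) :
  exists f : nat -> set 'rV[R]_n -> 'rV[R]_n,
    (forall k, borel_map_X (f k)) /\
    forall K, Xint K ->
      let S := range (fun k => f k K) in
      [/\ (forall k, (cube01 `\` K) (f k K)),
          injective (fun k => f k K),
          closure S = S `|` boundary K &
          (forall l, exists U : set 'rV[R]_n,
              [/\ open U, U (f l K) & U `&` closure S `<=` [set f l K]])].
Proof.
pose i0 : 'I_n := Ordinal hn.
exists (fun k K => sel_point K k); split=> [k|K XK S]; first exact: sel_point_borel i0 k.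
split.
- exact: (sel_point_out i0 XK).
- exact: (sel_point_inj i0 XK).
- exact: (sel_point_closure i0 XK).
- exact: (sel_point_isolated_in_closure i0 XK).
Qed.
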